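(* Let $\kappa<\kappa'$ be regular cardinals. Then the inclusion functor $\mathbf{CAMA}_{\kappa'}\hookrightarrow\mathbf{CAMA}_\kappa$ and the inclusion functor $\mathbf{MKF}_{\kappa'}\hookrightarrow\mathbf{MKF}_\kappa$ are not essentially surjective; i.e. there is an object of $\mathbf{CAMA}_\kappa$ not isomorphic to any object of $\mathbf{CAMA}_{\kappa'}$, and an object of $\mathbf{MKF}_\kappa$ not isomorphic to any object of $\mathbf{MKF}_{\kappa'}$.
   Context: A modal algebra is a Boolean algebra with a unary operation $\Diamond$ satisfying $\Diamond 0=0$ and $\Diamond(x\vee y)=\Diamond x\vee\Diamond y$; complete/atomic refer to the Boolean reduct; for a cardinal $\lambda$ it is $\lambda$-additive if $\Diamond\bigvee X=\bigvee_{x\in X}\Diamond x$ for every $X$ with $|X|<\lambda$. A homomorphism of complete modal algebras is a Boolean homomorphism preserving all joins and meets and commuting with $\Diamond$. $\mathbf{CAMA}_\lambda$ is the category of $\lambda$-additive complete atomic modal algebras with these homomorphisms. A multi-relational Kripke frame is a pair $\langle W,S\rangle$ with $W$ non-empty and $S$ a non-empty set of binary relations on $W$; it is $\lambda$-downward directed if for every $S'\subseteq S$ with $|S'|<\lambda$ there is $R\in S$ with $R\subseteq\bigcap S'$ (with $\bigcap\emptyset=W\times W$). A homomorphism $f:\langle W_1,S_1\rangle\to\langle W_2,S_2\rangle$ is a map $f:W_1\to W_2$ such that: (i) for every $x\in W_1$ and $R_2\in S_2$ there is $R_1\in S_1$ such that for all $y\in W_1$, $xR_1y$ implies $f(x)R_2f(y)$;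 (ii) for every $x\in W_1$ and $R_1\in S_1$ there is $R_2\in S_2$ such that for all $u\in W_2$, if $f(x)R_2u$ then there exists $y\in W_1$ with $xR_1y$ and $f(y)=u$; an isomorphism is a bijective homomorphism. $\mathbf{MKF}_\lambda$ is the category of $\lambda$-downward directed multi-relational Kripke frames with these homomorphisms. A functor is essentially surjective if every object of the target is isomorphic to the image of some object. *)

From Stdlib Require Import Classical FunctionalExtensionality PropExtensionality.

Definition injective_fun {A B : Type} (f : A -> B) : Prop :=
  forall x y, f x = f y -> x = y.

Definition surjective_fun {A B : Type} (f : A -> B) : Prop :=
  forall y, exists x, f x = y.

Definition card_le (A B : Type) : Prop := exists f : A -> B, injective_fun f.

Definition card_lt (A B : Type) : Prop := card_le A B /\ ~ card_le B A.

Definition regular_cardinal (K : Type) : Prop :=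
  card_le nat K /\
  forall (I : Type) (A : I -> Type),
    card_lt I K -> (forall i, card_lt (A i) K) -> card_lt {i : I & A i} K.

Record BoolAlg := {
  ba_car :> Type;
  ba_join : ba_car -> ba_car -> ba_car;
  ba_meet : ba_car -> ba_car -> ba_car;
  ba_compl : ba_car -> ba_car;
  ba_bot : ba_car;
  ba_top : ba_car;
  ba_joinC : forall x y, ba_join x y = ba_join y x;
  ba_meetC : forall x y, ba_meet x y = ba_meet y x;
  ba_joinA : forall x y z, ba_join x (ba_join y z) = ba_join (ba_join x y) z;
  ba_meetA : forall x y z, ba_meet x (ba_meet y z) = ba_meet (ba_meet x y) z;
  ba_joinK : forall x y, ba_join x (ba_meet x y) = x;
  ba_meetK : forall x y, ba_meet x (ba_join x y) = x;
  ba_meetDr : forall x y z,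
      ba_meet x (ba_join y z) = ba_join (ba_meet x y) (ba_meet x z);
  ba_join0 : forall x, ba_join x ba_bot = x;
  ba_meet1 : forall x, ba_meet x ba_top = x;
  ba_joinCr : forall x, ba_join x (ba_compl x) = ba_top;
  ba_meetCr : forall x, ba_meet x (ba_compl x) = ba_bot
}.

Arguments ba_join {b} _ _.
Arguments ba_meet {b} _ _.
Arguments ba_compl {b} _.
Arguments ba_bot {b}.
Arguments ba_top {b}.

Definition ba_le {B : BoolAlg} (x y : B) : Prop := ba_join x y = y.

Definition is_lub {B : BoolAlg} (X : B -> Prop) (s : B) : Prop :=
  (forall x, X x -> ba_le x s) /\
  (forall u, (forall x, X x -> ba_le x u) -> ba_le s u).

Definition is_glb {B : BoolAlg} (X : B -> Prop) (s : B) : Prop :=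
  (forall x, X x -> ba_le s x) /\
  (forall u, (forall x, X x -> ba_le u x) -> ba_le u s).

Definition img {A B : Type} (f : A -> B) (X : A -> Prop) : B -> Prop :=
  fun y => exists x, X x /\ y = f x.

Definition ba_complete (B : BoolAlg) : Prop :=
  forall X : B -> Prop, exists s, is_lub X s.

Definition ba_atom {B : BoolAlg} (a : B) : Prop :=
  a <> ba_bot /\ forall b : B, ba_le b a -> b = ba_bot \/ b = a.

Definition ba_atomic (B : BoolAlg) : Prop :=
  forall x : B, x <> ba_bot -> exists a, ba_atom a /\ ba_le a x.

Record ModalAlg := {
  ma_ba :> BoolAlg;
  ma_dia : ma_ba -> ma_ba;
  ma_dia0 : ma_dia ba_bot = ba_bot;
  ma_diaD : forall x y, ma_dia (ba_join x y) = ba_join (ma_dia x) (ma_dia y)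
}.

Arguments ma_dia {m} _.

Definition additive (lam : Type) (M : ModalAlg) : Prop :=
  forall (X : M -> Prop) (s : M),
    card_lt {x : M | X x} lam -> is_lub X s -> is_lub (img ma_dia X) (ma_dia s).

Record CAMA (lam : Type) := {
  cama_alg :> ModalAlg;
  cama_complete : ba_complete cama_alg;
  cama_atomic : ba_atomic cama_alg;
  cama_additive : additive lam cama_alg
}.

Definition cma_hom (A B : ModalAlg) (f : A -> B) : Prop :=
  (forall x y, f (ba_join x y) = ba_join (f x) (f y)) /\
  (forall x y, f (ba_meet x y) = ba_meet (f x) (f y)) /\
  (forall x, f (ba_compl x) = ba_compl (f x)) /\
  f ba_bot = ba_bot /\ f ba_top = ba_top /\
  (forall X s, is_lub X s -> is_lub (img f X) (f s)) /\
  (forall X s, is_glb X s -> is_glb (img f X) (f s)) /\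
  (forall x, f (ma_dia x) = ma_dia (f x)).

Definition cma_iso (A B : ModalAlg) : Prop :=
  exists (f : A -> B) (g : B -> A),
    cma_hom A B f /\ cma_hom B A g /\
    (forall x, g (f x) = x) /\ (forall y, f (g y) = y).

Definition rel (W : Type) := W -> W -> Prop.

Record MKF (lam : Type) := {
  mkf_W : Type;
  mkf_W_ne : inhabited mkf_W;
  mkf_S : rel mkf_W -> Prop;
  mkf_S_ne : exists R, mkf_S R;
  (* lambda-downward directed; the empty intersection is W x W *)
  mkf_dd : forall S' : rel mkf_W -> Prop,
      (forall R, S' R -> mkf_S R) ->
      card_lt {R : rel mkf_W | S' R} lam ->
      exists R, mkf_S R /\ (forall x y, R x y -> forall R', S' R' -> R' x y)
}.

Arguments mkf_W {lam} _.
Arguments mkf_S {lam} _.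

Definition frame_hom {W1 W2 : Type} (S1 : rel W1 -> Prop) (S2 : rel W2 -> Prop)
  (f : W1 -> W2) : Prop :=
  (forall x R2, S2 R2 -> exists R1, S1 R1 /\
      forall y, R1 x y -> R2 (f x) (f y)) /\
  (forall x R1, S1 R1 -> exists R2, S2 R2 /\
      forall u, R2 (f x) u -> exists y, R1 x y /\ f y = u).

Definition mkf_iso {l1 l2 : Type} (F : MKF l1) (G : MKF l2) : Prop :=
  exists f : mkf_W F -> mkf_W G,
    frame_hom (mkf_S F) (mkf_S G) f /\ injective_fun f /\ surjective_fun f.

(** The witness algebra is the powerset of [K] with [◇X = K] if [|X| = |K|]
    and [◇X = ∅] otherwise. Regularity of [K] makes [◇] preserve joins of
    fewer than [|K|] sets, but the [|K| < κ'] singletons join to [K] while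
    each has empty diamond, so [◇] is not [κ']-additive; additivity is
    invariant under isomorphism. The witness frame lives on [K] with the
    relations [K × A], [A] of small complement. In a [κ']-directed frame the
    [|K|] relations matching the [K × (K ∖ {k})] under an isomorphism have a
    common lower bound, which would force the isomorphism to identify two
    points. *)

From Stdlib Require Import Classical ClassicalEpsilon FunctionalExtensionality
  PropExtensionality ProofIrrelevance.

Lemma proj1_sig_inj (T : Type) (P : T -> Prop) : injective_fun (@proj1_sig T P).
Proof. exact (eq_sig_hprop (fun x => proof_irrelevance (P x))). Qed.

Lemma pred_ext (T : Type) (P Q : T -> Prop) : (forall t, P t <-> Q t) -> P = Q.
Proof.
  intros H; apply functional_extensionality; intro t.
  now apply propositional_extensionality.
Qed.

Lemma card_le_trans (A B C : Type) : card_le A B -> card_le B C -> card_le A C.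
Proof. intros [f Hf] [g Hg]; exists (fun a => g (f a)); intros x y E; auto. Qed.

Lemma card_le_lt_trans (A B C : Type) : card_le A B -> card_lt B C -> card_lt A C.
Proof.
  intros HAB [HBC HCB]; split.
  - exact (card_le_trans _ _ _ HAB HBC).
  - intro HCA; exact (HCB (card_le_trans _ _ _ HCA HAB)).
Qed.

Lemma card_le_subset (T : Type) (P Q : T -> Prop) :
  (forall x, Q x -> P x) -> card_le {x | Q x} {x | P x}.
Proof.
  intros HQP; exists (fun y => exist P (proj1_sig y) (HQP _ (proj2_sig y))).
  intros a b E; apply proj1_sig_inj; exact (f_equal (@proj1_sig _ _) E).
Qed.

Lemma card_lt_subset (K T : Type) (P Q : T -> Prop) :
  (forall x, Q x -> P x) -> card_lt {x | P x} K -> card_lt {x | Q x} K.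
Proof. intros HQP; apply card_le_lt_trans, card_le_subset, HQP. Qed.

Lemma card_le_img {A B : Type} (f : A -> B) (X : A -> Prop) :
  card_le {y | img f X y} {x | X x}.
Proof.
  pose (pre (y : {y | img f X y}) :=
          constructive_indefinite_description _ (proj2_sig y)).
  exists (fun y => exist X (proj1_sig (pre y)) (proj1 (proj2_sig (pre y)))).
  intros y1 y2 E; apply proj1_sig_inj.
  rewrite (proj2 (proj2_sig (pre y1))), (proj2 (proj2_sig (pre y2))).
  now apply (f_equal (fun x => f (proj1_sig x))) in E.
Qed.

Lemma card_le_range (I T : Type) (F : I -> T) :
  card_le {y | img F (fun _ => True) y} I.
Proof.
  apply (card_le_trans _ _ _ (card_le_img F _)).
  exists (@proj1_sig _ _); apply proj1_sig_inj.
Qed.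

Lemma not_card_le_nat_bool : ~ card_le nat bool.
Proof.
  intros [i Hi].
  destruct (i 0) eqn:E0, (i 1) eqn:E1, (i 2) eqn:E2;
    first [ assert (E : 0 = 1) by (apply Hi; congruence)
          | assert (E : 0 = 2) by (apply Hi; congruence)
          | assert (E : 1 = 2) by (apply Hi; congruence) ];
    discriminate.
Qed.

Lemma card_lt_bool (K : Type) : card_le nat K -> card_lt bool K.
Proof.
  intros HK; split.
  - refine (card_le_trans _ _ _ _ HK).
    exists (fun b : bool => if b then 1 else 0).
    intros [|] [|] E; easy.
  - intro HKb; exact (not_card_le_nat_bool (card_le_trans _ _ _ HK HKb)).
Qed.

Lemma card_lt_subsingleton (K T : Type) :
  card_le nat K -> (forall a b : T, a = b) -> card_lt T K.
Proof.
  intros [j Hj] HT; split.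
  - exists (fun _ => j 0); intros a b _; apply HT.
  - intros [i Hi].
    assert (E : j 0 = j 1) by (apply Hi, HT).
    discriminate (Hj _ _ E).
Qed.

Lemma not_card_lt_full (K : Type) (P : K -> Prop) :
  (forall y, P y) -> ~ card_lt {y | P y} K.
Proof.
  intros HP [_ HK]; apply HK.
  exists (fun k => exist P k (HP k)).
  intros a b E; exact (f_equal (@proj1_sig _ _) E).
Qed.

Lemma regular_card_lt_union (K : Type) : regular_cardinal K ->
  forall (I : Type) (A : I -> K -> Prop) (P : K -> Prop),
  card_lt I K -> (forall i, card_lt {y | A i y} K) ->
  (forall y, P y -> exists i, A i y) -> card_lt {y | P y} K.
Proof.
  intros [_ HK] I A P HI HA Hcover.
  refine (card_le_lt_trans _ _ _ _ (HK I (fun i => {y | A i y}) HI HA)).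
  pose (idx (y : {y | P y}) :=
          constructive_indefinite_description _ (Hcover _ (proj2_sig y))).
  exists (fun y => existT (fun i => {z | A i z}) (proj1_sig (idx y))
                     (exist _ (proj1_sig y) (proj2_sig (idx y)))).
  intros y1 y2 E; apply proj1_sig_inj.
  exact (f_equal (fun p : {i : I & {z | A i z}} => proj1_sig (projT2 p)) E).
Qed.

Lemma regular_card_lt_union2 (K : Type) : regular_cardinal K ->
  forall X Y : K -> Prop,
  card_lt {y | X y} K -> card_lt {y | Y y} K -> card_lt {y | X y \/ Y y} K.
Proof.
  intros HK X Y HX HY.
  apply (regular_card_lt_union K HK bool (fun b => if b then X else Y)).
  - exact (card_lt_bool K (proj1 HK)).
  - intros [|]; assumption.
  - intros y [H|H]; [exists true | exists false]; exact H.
Qed.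

Definition power_ba (T : Type) : BoolAlg.
Proof.
  refine (Build_BoolAlg (T -> Prop) (fun x y t => x t \/ y t)
    (fun x y t => x t /\ y t) (fun x t => ~ x t) (fun _ => False) (fun _ => True)
    _ _ _ _ _ _ _ _ _ _ _);
    intros; apply pred_ext; intro t; pose proof (classic (x t)); tauto.
Defined.

Lemma power_le (T : Type) (x y : power_ba T) : ba_le x y <-> forall t, x t -> y t.
Proof.
  unfold ba_le; simpl; split.
  - intros E t Hx; rewrite <- E; now left.
  - intros Hxy; apply pred_ext; intro t; split; [intros [H|H] | right]; auto.
Qed.

Lemma power_lub (T : Type) (X : power_ba T -> Prop) (s : power_ba T) :
  is_lub X s <-> forall t, s t <-> exists x, X x /\ x t.
Proof.
  split.
  - intros [Hub Hleast] t; split.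
    + apply (proj1 (power_le T s (fun t => exists x, X x /\ x t))).
      apply Hleast; intros x Hx; apply power_le; eauto.
    + intros (x & Hx & Hxt); exact (proj1 (power_le T _ _) (Hub x Hx) t Hxt).
  - intros Hs; split.
    + intros x Hx; apply power_le; intros t Ht; apply Hs; eauto.
    + intros u Hu; apply power_le; intros t Ht.
      destruct (proj1 (Hs t) Ht) as (x & Hx & Hxt).
      exact (proj1 (power_le T _ _) (Hu x Hx) t Hxt).
Qed.

Lemma power_complete (T : Type) : ba_complete (power_ba T).
Proof. intros X; exists (fun t => exists x, X x /\ x t); now apply power_lub. Qed.

Lemma power_singleton_atom (T : Type) (k : T) :
  @ba_atom (power_ba T) (fun j => j = k).
Proof.
  split.
  - intros E; exact (eq_ind _ (fun P => P k) eq_refl _ E).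
  - intros b Hb; rewrite power_le in Hb.
    destruct (classic (b k)) as [Hk | Hk]; [right | left];
      apply pred_ext; intro j; simpl; split; try tauto.
    + intros Hj; now rewrite (Hb j Hj).
    + intros ->; exact Hk.
    + intros Hj; apply Hk; now rewrite <- (Hb j Hj).
Qed.

Lemma power_atomic (T : Type) : ba_atomic (power_ba T).
Proof.
  intros x Hx.
  destruct (classic (exists k, x k)) as [[k Hk] | Hempty].
  - exists (fun j => j = k); split; [apply power_singleton_atom |].
    apply power_le; intros t ->; exact Hk.
  - exfalso; apply Hx, pred_ext; intro t; simpl; split; [eauto | tauto].
Qed.

Lemma power_singletons_lub (T : Type) :
  @is_lub (power_ba T) (img (fun (k j : T) => j = k) (fun _ => True)) ba_top.
Proof.
  apply power_lub; intros t; simpl; split; [| tauto].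
  intros _; exists (fun j => j = t); split; [exists t |]; auto.
Qed.

Section LargeDiamond.

Variable K : Type.
Hypothesis HK : regular_cardinal K.

Definition small (X : K -> Prop) : Prop := card_lt {y | X y} K.

Definition large_dia_ma : ModalAlg.
Proof.
  refine (Build_ModalAlg (power_ba K) (fun X _ => ~ small X) _ _).
  - apply pred_ext; intro t; simpl; split; [| tauto].
    intros Hlarge; apply Hlarge, card_lt_subsingleton; [apply HK |].
    intros [a []].
  - intros X Y; apply pred_ext; intro t; simpl; split.
    + intros HXY; apply NNPP; intros HXY'; apply HXY.
      apply (regular_card_lt_union2 K HK); apply NNPP; tauto.
    + intros [H | H] HXY; apply H; unfold small in *;
        refine (card_lt_subset K K _ _ _ HXY); simpl; auto.
Defined.

Lemma large_dia_additive : additive K large_dia_ma.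
Proof.
  intros X s HX Hs; apply power_lub.
  pose proof (proj1 (power_lub K X s) Hs) as Hunion; clear Hs.
  intros t; simpl; split.
  - intros Hlarge; apply NNPP; intros Hnone; apply Hlarge.
    apply (regular_card_lt_union K HK {x | X x} (@proj1_sig _ _)); [exact HX | |].
    + intros [x Hx]; simpl; apply NNPP; intros Hxlarge; apply Hnone.
      exists (fun _ => ~ small x); split; [exists x |]; auto.
    + intros y Hy; destruct (proj1 (Hunion y) Hy) as (x & Hx & Hxy).
      exists (exist _ x Hx); exact Hxy.
  - intros (z & (x & Hx & ->) & Hxlarge) Hsmall; apply Hxlarge.
    refine (card_lt_subset _ _ _ _ _ Hsmall).
    intros y Hy; apply Hunion; eauto.
Qed.

Definition large_dia_cama : CAMA K :=
  Build_CAMA K large_dia_ma (power_complete K) (power_atomic K) large_dia_additive.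

Lemma large_dia_not_additive (K' : Type) : card_lt K K' -> ~ additive K' large_dia_ma.
Proof.
  intros HKK' Hadd.
  assert (Hcard : card_lt {x | img (fun k j => j = k) (fun _ => True) x} K')
    by exact (card_le_lt_trans _ _ _ (card_le_range _ _ _) HKK').
  pose proof (proj1 (power_lub _ _ _) (Hadd _ _ Hcard (power_singletons_lub K))) as Hdia.
  destruct HK as [[j _] _].
  destruct (proj1 (Hdia (j 0))) as (z & (x & (k & _ & ->) & ->) & Hz).
  - exact (not_card_lt_full K (fun _ => True) (fun _ => I)).
  - apply Hz, card_lt_subsingleton; [exact (proj1 HK) |].
    intros [a Ha] [b Hb]; apply proj1_sig_inj; simpl; congruence.
Qed.

End LargeDiamond.

Lemma cma_iso_additive (lam : Type) (A B : ModalAlg) :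
  cma_iso A B -> additive lam B -> additive lam A.
Proof.
  intros (f & g & Hf & Hg & gf & fg) HB X s HX Hs.
  destruct Hf as (_ & _ & _ & _ & _ & f_lub & _ & _).
  destruct Hg as (_ & _ & _ & _ & _ & g_lub & _ & g_dia).
  assert (HfX : card_lt {y | img f X y} lam)
    by exact (card_le_lt_trans _ _ _ (card_le_img f X) HX).
  pose proof (g_lub _ _ (HB _ _ HfX (f_lub _ _ Hs))) as Hlub.
  rewrite g_dia, gf in Hlub.
  replace (img ma_dia X) with (img g (img ma_dia (img f X))); [exact Hlub |].
  apply pred_ext; intro a; split.
  - intros (z & (w & (x & Hx & ->) & ->) & ->); exists x; split; [exact Hx |].
    now rewrite g_dia, gf.
  - intros (x & Hx & ->); exists (ma_dia (f x)); split.
    + exists (f x); split; [exists x |]; auto.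
    + now rewrite g_dia, gf.
Qed.

Section CosmallFrame.

Variable K : Type.
Hypothesis HK : regular_cardinal K.

Definition cosmall_rel (R : rel K) : Prop :=
  exists A : K -> Prop, card_lt {y | ~ A y} K /\ R = (fun _ y => A y).

Lemma cosmall_rel_full : cosmall_rel (fun _ _ => True).
Proof.
  exists (fun _ => True); split; [| reflexivity].
  apply card_lt_subsingleton; [apply HK |]. intros [a Ha]; now contradiction Ha.
Qed.

Lemma cosmall_rel_directed (S' : rel K -> Prop) :
  (forall R, S' R -> cosmall_rel R) -> card_lt {R : rel K | S' R} K ->
  exists R, cosmall_rel R /\ (forall x y, R x y -> forall R', S' R' -> R' x y).
Proof.
  intros HS' Hcard.
  pose (A y := forall R', S' R' -> forall x, R' x y).
  exists (fun _ y => A y); split.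
  - exists A; split; [| reflexivity].
    apply (regular_card_lt_union K HK {R | S' R}
             (fun R y => exists x, ~ proj1_sig R x y)); [exact Hcard | |].
    + intros [R HR]; simpl; destruct (HS' R HR) as (B & HB & ->).
      refine (card_lt_subset K K _ _ _ HB); intros y [x Hx]; exact Hx.
    + intros y Hy; apply NNPP; intros Hnone; apply Hy; intros R' HR' x.
      apply NNPP; intros Hx; apply Hnone; exists (exist _ R' HR'); eauto.
  - intros x y Hy R' HR'; exact (Hy R' HR' x).
Qed.

Definition cosmall_frame : MKF K :=
  Build_MKF K K (let '(conj (ex_intro _ j _) _) := HK in inhabits (j 0))
    cosmall_rel (ex_intro _ _ cosmall_rel_full) cosmall_rel_directed.

Lemma cosmall_frame_not_iso (K' : Type) (G : MKF K') :
  card_lt K K' -> ~ mkf_iso cosmall_frame G.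
Proof.
  intros HKK' (f & (Hforth & Hback) & Hinj & _).
  destruct HK as [[j _] _]; pose (x0 := j 0 : K).
  assert (Hpunctured : forall k, cosmall_rel (fun _ y => y <> k)).
  { intros k; exists (fun y => y <> k); split; [| reflexivity].
    apply card_lt_subsingleton; [exact (proj1 HK) |].
    intros [a Ha] [b Hb]; apply proj1_sig_inj; simpl.
    apply NNPP in Ha; apply NNPP in Hb; congruence. }
  destruct (choice _ (fun k => Hback x0 _ (Hpunctured k))) as [R2 HR2].
  destruct (mkf_dd K' G (img R2 (fun _ => True))) as (R & HR & HRR2).
  - intros R (k & _ & ->); apply HR2.
  - exact (card_le_lt_trans _ _ _ (card_le_range _ _ _) HKK').
  - destruct (Hforth x0 R HR) as (R1 & (A & HA & ->) & HR1).
    assert (HAy : exists y, A y).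
    { apply NNPP; intros Hempty; apply (not_card_lt_full K (fun y => ~ A y)); eauto. }
    destruct HAy as [y Hy].
    pose proof (HRR2 _ _ (HR1 y Hy) (R2 y) (ex_intro _ y (conj I eq_refl))) as Hy2.
    destruct (proj2 (HR2 y) _ Hy2) as (y' & Hne & Heq).
    exact (Hne (Hinj _ _ Heq)).
Qed.

End CosmallFrame.

Theorem theorem10p2 (K K' : Type) :
  regular_cardinal K -> regular_cardinal K' -> card_lt K K' ->
  (exists A : CAMA K, forall B : CAMA K', ~ cma_iso A B) /\
  (exists F : MKF K, forall G : MKF K', ~ mkf_iso F G).
Proof.
  intros HK _ HKK'; split.
  - exists (large_dia_cama K HK); intros B Hiso.
    apply (large_dia_not_additive K HK K' HKK').
    exact (cma_iso_additive K' _ _ Hiso (cama_additive K' B)).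
  - exists (cosmall_frame K HK); intros G.
    exact (cosmall_frame_not_iso K HK K' G HKK').
Qed.
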